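(* Let $m,n\ge1$, $a\in(0,\infty)^m$, $b\in(0,\infty)^n$, and let $\Omega$ be a real $m\times n$ matrix. Let $(A,B)_0$ be an arbitrary point in the interior of $\tilde{\mathcal A}$, and define recursively $(A,B)_{k+1}=T_2(T_1((A,B)_k))$. Then $$\lim_{k\to\infty}F((A,B)_k)=\max_{(A,B)\in\tilde{\mathcal A}}F(A,B).$$
   Context: $\mathcal A$ is the set of pairs $(A,B)$ of $(m+1)\times(n+1)$ real matrices (indices $i=0,\dots,m$, $j=0,\dots,n$) with: $A_{ij},B_{ij}\ge0$; $a_i=\sum_{j=0}^nA_{ij}$ for $i=1,\dots,m$; $A_{0j}=0$ for all $j$; $b_j=\sum_{i=0}^mB_{ij}$ for $j=1,\dots,n$; $B_{i0}=0$ for all $i$. $F(A,B)=\sum_{i=1}^m\sum_{j=1}^n\sqrt{A_{ij}B_{ij}}\,\Omega_{ij}$. $\tilde{\mathcal A}\subset\mathcal A$ consists of those $(A,B)$ with: (1) $A_{ij}=B_{ij}=0$ whenever $i,j\ge1$ and $\Omega_{ij}\le0$; (2) for $j\ge1$, $B_{0j}=0$ if there is $i\ge1$ with $\Omega_{ij}>0$; (3) for $i\ge1$, $A_{i0}=0$ if there is $j\ge1$ with $\Omega_{ij}>0$. $T_1(A,B)=(E,B)$ where $E_{ij}=A_{ij}$ if $i=0$ or $j=0$, and otherwise $E_{ij}=a_iB_{ij}\Omega_{ij}^2/\sum_{k=1}^nB_{ik}\Omega_{ik}^2$ if this denominator is positive and $E_{ij}=0$ otherwise. $T_2(A,B)=(A,E)$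 where $E_{ij}=B_{ij}$ if $i=0$ or $j=0$, and otherwise $E_{ij}=b_jA_{ij}\Omega_{ij}^2/\sum_{k=1}^mA_{kj}\Omega_{kj}^2$ if this denominator is positive and $E_{ij}=0$ otherwise. ''Interior'' refers to the interior of the convex set $\tilde{\mathcal A}$ (relative to the affine space it spans). *)

From HB Require Import structures.
From mathcomp Require Import all_boot all_order all_algebra.
From mathcomp Require Import all_classical all_reals all_analysis.
Set Implicit Arguments. Unset Strict Implicit. Unset Printing Implicit Defensive.
Import Order.TTheory GRing.Theory Num.Theory.
Local Open Scope ring_scope.

Section Defs.
Variables (R : realType) (m n : nat).
Variables (a : 'I_m -> R) (b : 'I_n -> R) (Om : 'M[R]_(m, n)).

(* Matrices indexed by 0..m (rows) and 0..n (columns); the index i >= 1 of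
   the paper is [lift ord0 i'] for i' : 'I_m (paper index i'+1). *)
Definition mpair := ('M[R]_(m.+1, n.+1) * 'M[R]_(m.+1, n.+1))%type.

Definition inA (p : mpair) : Prop :=
  let A := p.1 in let B := p.2 in
  (forall i j, 0 <= A i j) /\ (forall i j, 0 <= B i j) /\
  (forall i : 'I_m, a i = \sum_(j < n.+1) A (lift ord0 i) j) /\
  (forall j, A ord0 j = 0) /\
  (forall j : 'I_n, b j = \sum_(i < m.+1) B i (lift ord0 j)) /\
  (forall i, B i ord0 = 0).

Definition Fobj (p : mpair) : R :=
  \sum_(i < m) \sum_(j < n)
     Num.sqrt (p.1 (lift ord0 i) (lift ord0 j) * p.2 (lift ord0 i) (lift ord0 j))
     * Om i j.

Definition inAt (p : mpair) : Prop :=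
  inA p /\
  (forall (i : 'I_m) (j : 'I_n), Om i j <= 0 ->
      p.1 (lift ord0 i) (lift ord0 j) = 0 /\ p.2 (lift ord0 i) (lift ord0 j) = 0) /\
  (forall j : 'I_n, (exists i : 'I_m, 0 < Om i j) -> p.2 ord0 (lift ord0 j) = 0) /\
  (forall i : 'I_m, (exists j : 'I_n, 0 < Om i j) -> p.1 (lift ord0 i) ord0 = 0).

Definition T1 (p : mpair) : mpair :=
  let A := p.1 in let B := p.2 in
  (\matrix_(i, j)
     match unlift ord0 i, unlift ord0 j with
     | Some i', Some j' =>
         let d := \sum_(k < n) B i (lift ord0 k) * Om i' k ^+ 2 in
         if 0 < d then a i' * B i j * Om i' j' ^+ 2 / d else 0
     | _, _ => A i j
     end, B).

Definition T2 (p : mpair) : mpair :=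
  let A := p.1 in let B := p.2 in
  (A, \matrix_(i, j)
     match unlift ord0 i, unlift ord0 j with
     | Some i', Some j' =>
         let d := \sum_(k < m) A (lift ord0 k) j * Om k j' ^+ 2 in
         if 0 < d then b j' * A i j * Om i' j' ^+ 2 / d else 0
     | _, _ => B i j
     end).

Definition affine_hull (S : mpair -> Prop) (q : mpair) : Prop :=
  exists (N : nat) (lam : 'I_N -> R) (pts : 'I_N -> mpair),
    (forall k, S (pts k)) /\ \sum_(k < N) lam k = 1 /\
    q.1 = \sum_(k < N) lam k *: (pts k).1 /\
    q.2 = \sum_(k < N) lam k *: (pts k).2.

Definition rel_interior (S : mpair -> Prop) (p : mpair) : Prop :=
  S p /\ exists2 eps : R, 0 < eps &
    forall q, affine_hull S q ->
      (forall i j, `|q.1 i j - p.1 i j| < eps) ->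
      (forall i j, `|q.2 i j - p.2 i j| < eps) -> S q.

Definition iterT (p0 : mpair) (k : nat) : mpair :=
  iter k (fun p => T2 (T1 p)) p0.

End Defs.

From HB Require Import structures.
From mathcomp Require Import all_boot all_order all_algebra.
From mathcomp Require Import all_classical all_reals all_analysis.
From mathcomp Require Import ring lra.
Import Order.TTheory GRing.Theory Num.Theory.
Import numFieldNormedType.Exports.
Local Open Scope classical_set_scope.
Local Open Scope ring_scope.
Set Implicit Arguments. Unset Strict Implicit. Unset Printing Implicit Defensive.

(* Let (A', B') maximise F, with F' = F(A', B') > 0, and weigh each entry by
   w_ij = Om_ij sqrt(A'_ij B'_ij) / F', a probability distribution.  Along the
   iteration the potential L(A, B) = sum_ij w_ij ln B_ij is bounded by
   sum_ij w_ij ln b_j and increases at each step by at least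
   2 ln (F' / F(T1 p)) + 2 ln (F' / F(T2 (T1 p))) >= 2 (1 - F(T2 (T1 p)) / F') >= 0,
   so these increments are summable and F(p_k) -> F'.  The bound for T1 is
   Gibbs' inequality for w against the sub-probability
   A'_ij sqrt(a_i S_i) / (a_i F(T1 p)), S_i being the denominator of T1; the
   bound for T2 follows because T2 is T1 conjugated by (A, B) |-> (B^T, A^T).
   The logarithms stay finite since relative interior points, and hence all
   iterates, are positive on the support of Om; a maximiser exists by
   compactness. *)

Section Entries.
Variables (R : realType) (m n : nat).
Implicit Types (p q : mpair R m n) (Om : 'M[R]_(m, n)).

Definition Ain p (i : 'I_m) (j : 'I_n) := p.1 (lift ord0 i) (lift ord0 j).
Definition Bin p (i : 'I_m) (j : 'I_n) := p.2 (lift ord0 i) (lift ord0 j).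

Lemma FobjE Om p :
  Fobj Om p = \sum_i \sum_j Num.sqrt (Ain p i j * Bin p i j) * Om i j.
Proof. by []. Qed.

Definition pos_support Om p :=
  forall i j, 0 < Om i j -> 0 < Ain p i j /\ 0 < Bin p i j.

Definition weight Om q i j := Om i j * Num.sqrt (Ain q i j * Bin q i j) / Fobj Om q.

Definition swap p : mpair R n m := (p.2^T, p.1^T).

End Entries.

Section Swap.
Variables (R : realType) (m n : nat).
Implicit Types (p q : mpair R m n) (Om : 'M[R]_(m, n)).

Lemma Ain_swap p i j : Ain (swap p) j i = Bin p i j.
Proof. by rewrite /Ain /= mxE. Qed.

Lemma Bin_swap p i j : Bin (swap p) j i = Ain p i j.
Proof. by rewrite /Bin /= mxE. Qed.

Lemma Fobj_swap Om p : Fobj Om^T (swap p) = Fobj Om p.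
Proof.
rewrite /Fobj exchange_big; apply: eq_bigr => i _; apply: eq_bigr => j _.
by rewrite /= !mxE [p.1 _ _ * _]mulrC.
Qed.

Lemma weight_swap Om q i j : weight Om^T (swap q) j i = weight Om q i j.
Proof. by rewrite /weight Fobj_swap Ain_swap Bin_swap mxE [Bin _ _ _ * _]mulrC. Qed.

Lemma pos_support_swap Om p : pos_support Om p -> pos_support Om^T (swap p).
Proof. by move=> pP j i; rewrite mxE Ain_swap Bin_swap => /pP []. Qed.

Lemma inAt_swap a b Om p : inAt a b Om p -> inAt b a Om^T (swap p).
Proof.
case=> [[A0 [B0 [Ar [A0j [Bc Bi0]]]]] [C1 [C2 C3]]].
split; [split; [|split; [|split; [|split; [|split]]]] | split; [|split]] => /=.
- by move=> i j; rewrite mxE.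
- by move=> i j; rewrite mxE.
- by move=> j; rewrite Bc; apply: eq_bigr => i _; rewrite mxE.
- by move=> i; rewrite mxE.
- by move=> i; rewrite Ar; apply: eq_bigr => j _; rewrite mxE.
- by move=> j; rewrite mxE.
- by move=> j i; rewrite mxE => /C1 [? ?]; rewrite !mxE.
- by move=> i [j]; rewrite mxE => Om_gt0; rewrite mxE; apply: C3; exists j.
- by move=> j [i]; rewrite mxE => Om_gt0; rewrite mxE; apply: C2; exists i.
Qed.

Lemma T2_swap b Om p : T2 b Om p = swap (T1 b Om^T (swap p)).
Proof.
rewrite /T2 /T1 /swap /= trmxK; congr pair; apply/matrixP => i j; rewrite !mxE.
case: (unliftP ord0 i) => [i'|] ->; case: (unliftP ord0 j) => [j'|] -> //=;
  rewrite ?mxE //.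
by congr (if 0 < _ then _ / _ else _); apply: eq_bigr => k _; rewrite !mxE.
Qed.

End Swap.

Lemma ler_sum_term (R : numDomainType) (I : finType) (F : I -> R) i :
  (forall k, 0 <= F k) -> F i <= \sum_k F k.
Proof.
by move=> F_ge0; rewrite (bigD1 i) //= lerDl sumr_ge0 // => k _; apply: F_ge0.
Qed.

Section Feasible.
Variables (R : realType) (m n : nat) (a : 'I_m -> R) (b : 'I_n -> R) (Om : 'M[R]_(m, n)).
Variable p : mpair R m n.
Hypothesis pS : inAt a b Om p.

Lemma inAt_ge0 x y : 0 <= p.1 x y /\ 0 <= p.2 x y.
Proof. by case: pS => [[A0 [B0 _]] _]. Qed.

Lemma Ain_ge0 i j : 0 <= Ain p i j.
Proof. exact: (inAt_ge0 _ _).1. Qed.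

Lemma Bin_ge0 i j : 0 <= Bin p i j.
Proof. exact: (inAt_ge0 _ _).2. Qed.

Lemma Ain_Bin_eq0 i j : Om i j <= 0 -> Ain p i j = 0 /\ Bin p i j = 0.
Proof. by case: pS => _ [C1 _]; apply: C1. Qed.

Lemma row_sum i : a i = p.1 (lift ord0 i) ord0 + \sum_j Ain p i j.
Proof. by case: pS => [[_ [_ [Ar _]]] _]; rewrite Ar big_ord_recl. Qed.

Lemma col_sum j : b j = p.2 ord0 (lift ord0 j) + \sum_i Bin p i j.
Proof. by case: pS => [[_ [_ [_ [_ [Bc _]]]]] _]; rewrite Bc big_ord_recl. Qed.

Lemma sum_Ain_le i : \sum_j Ain p i j <= a i.
Proof. by rewrite (row_sum i) lerDr; apply: (inAt_ge0 _ _).1. Qed.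

Lemma Bin_le i j : Bin p i j <= b j.
Proof.
rewrite (col_sum j) (bigD1 i) //= addrCA lerDl addr_ge0 //.
  exact: (inAt_ge0 _ _).2.
by apply: sumr_ge0 => k _; apply: Bin_ge0.
Qed.

Lemma Fobj_term_ge0 i j : 0 <= Num.sqrt (Ain p i j * Bin p i j) * Om i j.
Proof.
have [Om_gt0 | Om_le0] := ltrP 0 (Om i j).
  by apply: mulr_ge0; [exact: sqrtr_ge0 | exact: ltW].
by rewrite (Ain_Bin_eq0 Om_le0).1 mul0r sqrtr0 mul0r.
Qed.

Lemma Fobj_ge0 : 0 <= Fobj Om p.
Proof. by rewrite FobjE; do 2!apply: sumr_ge0 => ? _; exact: Fobj_term_ge0. Qed.

Lemma Fobj_gt0 i j : pos_support Om p -> 0 < Om i j -> 0 < Fobj Om p.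
Proof.
move=> pP Om_gt0; have [A_gt0 B_gt0] := pP i j Om_gt0.
rewrite FobjE pair_bigA; apply: lt_le_trans (ler_sum_term (i, j) _).
  by rewrite mulr_gt0 // sqrtr_gt0 mulr_gt0.
by move=> [k l]; exact: Fobj_term_ge0.
Qed.

End Feasible.

Section Weights.
Variables (R : realType) (m n : nat) (a : 'I_m -> R) (b : 'I_n -> R) (Om : 'M[R]_(m, n)).
Variable q : mpair R m n.
Hypotheses (qS : inAt a b Om q) (Fq_gt0 : 0 < Fobj Om q).

Lemma weight_ge0 i j : 0 <= weight Om q i j.
Proof.
have [Om_gt0 | Om_le0] := ltrP 0 (Om i j).
  by apply: divr_ge0; [apply: mulr_ge0 => //; exact: ltW | exact: ltW].
by rewrite /weight (Ain_Bin_eq0 qS Om_le0).1 mul0r sqrtr0 mulr0 mul0r.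
Qed.

Lemma sum_weight : \sum_ij weight Om q ij.1 ij.2 = 1.
Proof.
rewrite -(pair_bigA _ (weight Om q)) -[RHS](divff (negbT (gt_eqF Fq_gt0))) mulr_suml.
apply: eq_bigr => i _; rewrite mulr_suml; apply: eq_bigr => j _.
by rewrite /weight [Om i j * _]mulrC.
Qed.

Lemma weight_gt0P i j :
  0 < weight Om q i j -> [/\ 0 < Om i j, 0 < Ain q i j & 0 < Bin q i j].
Proof.
rewrite /weight pmulr_lgt0 ?invr_gt0 // => w_gt0.
have Om_gt0 : 0 < Om i j.
  rewrite ltNge; apply/negP => /(Ain_Bin_eq0 qS) [A0 _].
  by move: w_gt0; rewrite A0 mul0r sqrtr0 mulr0 ltxx.
move: w_gt0; rewrite pmulr_rgt0 // sqrtr_gt0 => AB_gt0.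
split => //; rewrite lt0r ?(Ain_ge0 qS) ?(Bin_ge0 qS) andbT.
  by apply: contraTneq AB_gt0 => ->; rewrite mul0r ltxx.
by apply: contraTneq AB_gt0 => ->; rewrite mulr0 ltxx.
Qed.

Lemma exists_weight_gt0 : exists i j, 0 < weight Om q i j.
Proof.
apply/not_existsP => no_pos.
have : \sum_ij weight Om q ij.1 ij.2 <= 0.
  apply: sumr_le0 => -[i j] _; rewrite leNgt; apply/negP => w_gt0.
  by apply: (no_pos i); exists j.
by rewrite sum_weight ler10.
Qed.

End Weights.

Section Logarithm.
Variable R : realType.

Lemma ln_le_subr1 (x : R) : 0 < x -> ln x <= x - 1.
Proof. by move=> x_gt0; have := @le_ln1Dx R (x - 1); rewrite [1 + _]addrC subrK; apply; lra. Qed.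

Lemma gibbs_ineq (I : finType) (w y : I -> R) :
  (forall i, 0 <= w i) -> (forall i, 0 <= y i) -> (forall i, 0 < w i -> 0 < y i) ->
  \sum_i w i * ln (y i / w i) <= \sum_i y i - \sum_i w i.
Proof.
move=> w_ge0 y_ge0 wy; rewrite -sumrB; apply: ler_sum => i _.
have [w_gt0 | w_le0] := ltrP 0 (w i); last first.
  by rewrite (@le_anti _ _ (w i) 0) ?w_le0 ?w_ge0 // mul0r subr0.
have := ler_wpM2l (ltW w_gt0) (ln_le_subr1 (divr_gt0 (wy i w_gt0) w_gt0)).
by rewrite mulrBr mulr1 mulrCA divff ?mulr1 // gt_eqF.
Qed.

End Logarithm.

Section HalfStep.
Variables (R : realType) (m n : nat) (a : 'I_m -> R) (b : 'I_n -> R) (Om : 'M[R]_(m, n)).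
Hypothesis a_gt0 : forall i, 0 < a i.

Definition rowS (p : mpair R m n) i := \sum_(k < n) Bin p i k * Om i k ^+ 2.

Lemma Ain_T1 p i j : Ain (T1 a Om p) i j =
  if 0 < rowS p i then a i * Bin p i j * Om i j ^+ 2 / rowS p i else 0.
Proof. by rewrite /Ain /T1 /= mxE !liftK. Qed.

Lemma T1_row0 p j : (T1 a Om p).1 ord0 j = p.1 ord0 j.
Proof. by rewrite /T1 /= mxE unlift_none. Qed.

Lemma T1_col0 p i : (T1 a Om p).1 i ord0 = p.1 i ord0.
Proof. by rewrite /T1 /= mxE unlift_none; case: (unlift ord0 i). Qed.

Variable p : mpair R m n.
Hypotheses (pS : inAt a b Om p) (pP : pos_support Om p).

Lemma rowS_ge0 i : 0 <= rowS p i.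
Proof. by apply: sumr_ge0 => k _; rewrite mulr_ge0 ?sqr_ge0 ?(Bin_ge0 pS). Qed.

Lemma rowS_gt0 i j : 0 < Om i j -> 0 < rowS p i.
Proof.
move=> Om_gt0; rewrite /rowS (bigD1 j) //= ltr_pwDl ?sumr_ge0 //.
  by rewrite mulr_gt0 ?exprn_gt0 //; case: (pP Om_gt0).
by move=> k _; rewrite mulr_ge0 ?sqr_ge0 ?(Bin_ge0 pS).
Qed.

Lemma rowS_gt0_support i : 0 < rowS p i -> exists j, 0 < Om i j.
Proof.
move=> S_gt0; apply/not_existsP => no_pos.
suff S0 : rowS p i = 0 by rewrite S0 ltxx in S_gt0.
apply: big1 => k _.
have /(Ain_Bin_eq0 pS) [_ ->] : Om i k <= 0 by rewrite leNgt; apply/negP; exact: no_pos.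
by rewrite mul0r.
Qed.

Lemma Ain_T1_ge0 i j : 0 <= Ain (T1 a Om p) i j.
Proof.
rewrite Ain_T1; case: ifP => // S_gt0.
apply: divr_ge0 (ltW S_gt0).
by apply: mulr_ge0 (sqr_ge0 _); apply: mulr_ge0 (ltW (a_gt0 i)) (Bin_ge0 pS i j).
Qed.

Lemma sum_Ain_T1 i : 0 < rowS p i -> \sum_j Ain (T1 a Om p) i j = a i.
Proof.
move=> S_gt0; rewrite -[RHS](mulfK (negbT (gt_eqF S_gt0))).
by rewrite /rowS mulr_sumr mulr_suml; apply: eq_bigr => j _; rewrite Ain_T1 S_gt0 !mulrA.
Qed.

Lemma inAt_T1 : inAt a b Om (T1 a Om p).
Proof.
have [[A0 [B0 [_ [A0j [Bc Bi0]]]]] [C1 [C2 C3]]] := pS.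
split; [split; [|split; [exact: B0|split; [|split; [|split]]]] | split; [|split]].
- move=> x y; case: (unliftP ord0 x) => [i|] ->; last by rewrite T1_row0.
  case: (unliftP ord0 y) => [j|] ->; last by rewrite T1_col0.
  exact: Ain_T1_ge0.
- move=> i; rewrite big_ord_recl T1_col0.
  have [S_gt0 | S_le0] := ltrP 0 (rowS p i).
    have [j Om_gt0] := rowS_gt0_support S_gt0.
    by rewrite C3; [rewrite add0r; have := sum_Ain_T1 S_gt0; rewrite /Ain => -> | exists j].
  rewrite big1 ?addr0 => [|j _]; last by rewrite -/(Ain _ i j) Ain_T1 ltNge S_le0.
  rewrite (row_sum pS i) big1 ?addr0 // => j _.
  have [Om_gt0 | Om_le0] := ltrP 0 (Om i j); last exact: (Ain_Bin_eq0 pS Om_le0).1.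
  by have := rowS_gt0 Om_gt0; rewrite ltNge S_le0.
- by move=> j; rewrite T1_row0.
- exact: Bc.
- exact: Bi0.
- move=> i j Om_le0; split; last exact: (Ain_Bin_eq0 pS Om_le0).2.
  rewrite -/(Ain _ i j) Ain_T1 (Ain_Bin_eq0 pS Om_le0).2.
  by case: ifP => _; rewrite ?mulr0 ?mul0r.
- exact: C2.
- by move=> i Hi; rewrite T1_col0; apply: C3.
Qed.

Lemma pos_support_T1 : pos_support Om (T1 a Om p).
Proof.
move=> i j Om_gt0; have [_ B_gt0] := pP Om_gt0; split => //.
have S_gt0 := rowS_gt0 Om_gt0.
by rewrite Ain_T1 S_gt0 divr_gt0 // !mulr_gt0 // exprn_gt0.
Qed.

Lemma Fobj_T1 : Fobj Om (T1 a Om p) = \sum_i Num.sqrt (a i * rowS p i).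
Proof.
rewrite FobjE; apply: eq_bigr => i _.
have [S_gt0 | S_le0] := ltrP 0 (rowS p i); last first.
  rewrite (@le_anti _ _ (rowS p i) 0) ?S_le0 ?rowS_ge0 // mulr0 sqrtr0.
  by apply: big1 => j _; rewrite Ain_T1 ltNge S_le0 mul0r sqrtr0 mul0r.
have -> : a i * rowS p i = a i / rowS p i * rowS p i ^+ 2.
  by field; rewrite gt_eqF.
rewrite sqrtrM ?divr_ge0 ?ltW // sqrtr_sqr gtr0_norm // mulr_sumr.
apply: eq_bigr => j _; rewrite Ain_T1 S_gt0.
have [Om_gt0 | Om_le0] := ltrP 0 (Om i j); last first.
  by rewrite (Ain_Bin_eq0 pS Om_le0).2 !(mulr0, mul0r, sqrtr0).
have -> : a i * Bin p i j * Om i j ^+ 2 / rowS p i * Bin p i j =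
          a i / rowS p i * (Bin p i j * Om i j) ^+ 2 by ring.
rewrite sqrtrM ?divr_ge0 ?ltW // sqrtr_sqr ger0_norm; first ring.
by rewrite mulr_ge0 ?(Bin_ge0 pS) ?ltW.
Qed.

Section Gain.
Variable q : mpair R m n.
Hypotheses (qS : inAt a b Om q) (Fq_gt0 : 0 < Fobj Om q).

Lemma Fobj_T1_gt0 : 0 < Fobj Om (T1 a Om p).
Proof.
have [i [j /(weight_gt0P qS Fq_gt0) [Om_gt0 _ _]]] := exists_weight_gt0 Fq_gt0.
exact: (Fobj_gt0 inAt_T1 pos_support_T1 Om_gt0).
Qed.

Definition T1_weight (ij : 'I_m * 'I_n) := Ain q ij.1 ij.2 *
  (Num.sqrt (a ij.1 * rowS p ij.1) / (a ij.1 * Fobj Om (T1 a Om p))).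

Lemma T1_weight_ge0 ij : 0 <= T1_weight ij.
Proof.
have G_gt0 := Fobj_T1_gt0; have ai_gt0 := a_gt0 ij.1.
by rewrite mulr_ge0 ?(Ain_ge0 qS) // divr_ge0 ?sqrtr_ge0 // ltW ?mulr_gt0.
Qed.

Lemma T1_weight_gt0 ij : 0 < weight Om q ij.1 ij.2 -> 0 < T1_weight ij.
Proof.
move=> /(weight_gt0P qS Fq_gt0) [Om_gt0 Aq_gt0 _].
have S_gt0 := rowS_gt0 Om_gt0; have G_gt0 := Fobj_T1_gt0; have ai_gt0 := a_gt0 ij.1.
by rewrite mulr_gt0 // divr_gt0 ?mulr_gt0 // sqrtr_gt0 mulr_gt0.
Qed.

Lemma sum_T1_weight : \sum_ij T1_weight ij <= 1.
Proof.
have G_gt0 := Fobj_T1_gt0.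
have -> : (1 : R) = \sum_i Num.sqrt (a i * rowS p i) / Fobj Om (T1 a Om p).
  by rewrite -mulr_suml -Fobj_T1 divff // gt_eqF.
rewrite -(pair_bigA _ (fun i j => T1_weight (i, j))); apply: ler_sum => i _.
rewrite /T1_weight /= -mulr_suml; set t := Num.sqrt _.
have c_ge0 : 0 <= t / (a i * Fobj Om (T1 a Om p)).
  by rewrite divr_ge0 ?sqrtr_ge0 // ltW ?mulr_gt0.
apply: le_trans (ler_wpM2r c_ge0 (sum_Ain_le qS i)) _.
by rewrite mulrCA invfM mulVKf // gt_eqF.
Qed.

Lemma T1_ratio i j : 0 < weight Om q i j ->
  Ain (T1 a Om p) i j * Bin q i j / (Bin p i j * Ain q i j) =
  (Fobj Om q / Fobj Om (T1 a Om p) * (weight Om q i j / T1_weight (i, j))) ^+ 2.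
Proof.
move=> /(weight_gt0P qS Fq_gt0) [Om_gt0 Aq_gt0 Bq_gt0].
have [_ B_gt0] := pP Om_gt0; have S_gt0 := rowS_gt0 Om_gt0.
have ai_gt0 := a_gt0 i; have G_gt0 := Fobj_T1_gt0.
rewrite Ain_T1 S_gt0 /T1_weight /weight /=.
set s := Num.sqrt (_ * Bin q i j); set t := Num.sqrt (_ * rowS p i).
have s2 : s ^+ 2 = Ain q i j * Bin q i j by rewrite sqr_sqrtr // ltW // mulr_gt0.
have t2 : t ^+ 2 = a i * rowS p i by rewrite sqr_sqrtr // ltW // mulr_gt0.
have s_gt0 : 0 < s by rewrite sqrtr_gt0 mulr_gt0.
have t_gt0 : 0 < t by rewrite sqrtr_gt0 mulr_gt0.
rewrite !(exprMn, exprVn) s2 t2.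
by field; rewrite !gt_eqF.
Qed.

Lemma T1_gain :
  2 * ln (Fobj Om q / Fobj Om (T1 a Om p)) <=
  \sum_i \sum_j weight Om q i j *
    ln (Ain (T1 a Om p) i j * Bin q i j / (Bin p i j * Ain q i j)).
Proof.
set c := ln _; set w := weight Om q.
have gibbs := gibbs_ineq (fun ij => weight_ge0 qS Fq_gt0 ij.1 ij.2) T1_weight_ge0 T1_weight_gt0.
have log_ratio i j : w i j * ln (Ain (T1 a Om p) i j * Bin q i j / (Bin p i j * Ain q i j)) =
    w i j * (2 * c) - 2 * (w i j * ln (T1_weight (i, j) / w i j)).
  have [w_gt0 | w_le0] := ltrP 0 (w i j); last first.
    by rewrite (@le_anti _ _ (w i j) 0) ?w_le0 ?(weight_ge0 qS) // !mul0r mulr0 subr0.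
  have y_gt0 := @T1_weight_gt0 (i, j) w_gt0; have G_gt0 := Fobj_T1_gt0.
  have FG_pos : Fobj Om q / Fobj Om (T1 a Om p) \is Num.pos by rewrite posrE divr_gt0.
  have wy_pos : w i j / T1_weight (i, j) \is Num.pos by rewrite posrE divr_gt0.
  have yw_pos : T1_weight (i, j) / w i j \is Num.pos by rewrite posrE divr_gt0.
  rewrite T1_ratio // lnXn; last by rewrite -posrE rpredM.
  by rewrite lnM // -[w i j / _]invf_div lnV // -/c mulr2n; ring.
rewrite pair_bigA (eq_bigr _ (fun ij _ => log_ratio ij.1 ij.2)) /=.
rewrite sumrB -mulr_suml (sum_weight Fq_gt0) mul1r -mulr_sumr.
move: gibbs; rewrite (sum_weight Fq_gt0); have := sum_T1_weight; lra.
Qed.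

End Gain.

End HalfStep.

Section SwapBack.
Variables (R : realType) (m n : nat) (a : 'I_m -> R) (b : 'I_n -> R) (Om : 'M[R]_(m, n)).
Variable p : mpair R n m.

Lemma inAt_swapT : inAt b a Om^T p -> inAt a b Om (swap p).
Proof. by move=> /inAt_swap; rewrite trmxK. Qed.

Lemma pos_support_swapT : pos_support Om^T p -> pos_support Om (swap p).
Proof. by move=> /pos_support_swap; rewrite trmxK. Qed.

Lemma Fobj_swapT : Fobj Om (swap p) = Fobj Om^T p.
Proof. by rewrite -(Fobj_swap Om^T) trmxK. Qed.

End SwapBack.

Section OtherHalfStep.
Variables (R : realType) (m n : nat) (a : 'I_m -> R) (b : 'I_n -> R) (Om : 'M[R]_(m, n)).
Hypothesis b_gt0 : forall j, 0 < b j.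
Variable p : mpair R m n.
Hypotheses (pS : inAt a b Om p) (pP : pos_support Om p).

Lemma inAt_T2 : inAt a b Om (T2 b Om p).
Proof.
by rewrite T2_swap; apply/inAt_swapT/inAt_T1/pos_support_swap/pP/inAt_swap.
Qed.

Lemma pos_support_T2 : pos_support Om (T2 b Om p).
Proof.
rewrite T2_swap; apply/pos_support_swapT/pos_support_T1 => //.
- exact: inAt_swap pS.
- exact: pos_support_swap.
Qed.

Lemma T2_gain q : inAt a b Om q -> 0 < Fobj Om q ->
  2 * ln (Fobj Om q / Fobj Om (T2 b Om p)) <=
  \sum_i \sum_j weight Om q i j *
    ln (Bin (T2 b Om p) i j * Ain q i j / (Ain p i j * Bin q i j)).
Proof.
move=> qS Fq_gt0.
have := T1_gain b_gt0 (inAt_swap pS) (pos_support_swap pP) (inAt_swap qS).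
rewrite Fobj_swap -Fobj_swapT -T2_swap exchange_big => /(_ Fq_gt0) /le_trans; apply.
apply: ler_sum => i _; apply: ler_sum => j _.
by rewrite weight_swap (Ain_swap q) (Bin_swap q) (Bin_swap p) T2_swap Bin_swap lexx.
Qed.

End OtherHalfStep.

Lemma cvg0_of_bounded_increments (R : realType) (u L : R ^nat) (M : R) :
  (forall k, 0 <= u k) -> (forall k, u k <= L k.+1 - L k) -> (forall k, L k <= M) ->
  u @ \oo --> 0.
Proof.
move=> u_ge0 u_le L_le; apply: cvg_series_cvg_0; apply: nondecreasing_is_cvgn.
  exact: (nondecreasing_series (fun k _ _ => u_ge0 k)).
exists (M - L 0%N) => _ [K _ <-]; apply: le_trans (_ : L K - L 0%N <= _); last first.
  by rewrite lerB.
rewrite /series /=; elim: K => [|K IH]; first by rewrite big_geq // subrr.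
rewrite big_nat_recr //=; apply: le_trans (lerD IH (u_le K)) _.
by rewrite addrC addrA subrK.
Qed.

Section Potential.
Variables (R : realType) (m n : nat) (a : 'I_m -> R) (b : 'I_n -> R) (Om : 'M[R]_(m, n)).
Hypotheses (a_gt0 : forall i, 0 < a i) (b_gt0 : forall j, 0 < b j).
Variable q : mpair R m n.
Hypotheses (qS : inAt a b Om q) (Fq_gt0 : 0 < Fobj Om q).

Definition potential (p : mpair R m n) := \sum_i \sum_j weight Om q i j * ln (Bin p i j).

Lemma potential_gain p : inAt a b Om p -> pos_support Om p ->
  2 * ln (Fobj Om q / Fobj Om (T1 a Om p)) +
  2 * ln (Fobj Om q / Fobj Om (T2 b Om (T1 a Om p)))
  <= potential (T2 b Om (T1 a Om p)) - potential p.
Proof.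
move=> pS pP; set p1 := T1 a Om p; set p2 := T2 b Om p1.
have p1S : inAt a b Om p1 := inAt_T1 a_gt0 pS pP.
have p1P : pos_support Om p1 := pos_support_T1 a_gt0 pS pP.
have p2P : pos_support Om p2 := pos_support_T2 b_gt0 p1S p1P.
apply: le_trans (lerD (T1_gain a_gt0 pS pP qS Fq_gt0) (T2_gain b_gt0 p1S p1P qS Fq_gt0)) _.
rewrite -big_split -sumrB; apply: ler_sum => i _.
rewrite -big_split -sumrB; apply: ler_sum => j _ /=.
have [w_gt0 | w_le0] := ltrP 0 (weight Om q i j); last first.
  by rewrite (@le_anti _ _ (weight Om q i j) 0) ?w_le0 ?(weight_ge0 qS) // !mul0r subr0 addr0.
have [Om_gt0 Aq_gt0 Bq_gt0] := weight_gt0P qS Fq_gt0 w_gt0.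
have [A1_gt0 B_gt0] := p1P i j Om_gt0; have [_ B2_gt0] := p2P i j Om_gt0.
rewrite -mulrDr -mulrBr -lnM ?posrE ?divr_gt0 ?mulr_gt0 // -ln_div ?posrE //.
by rewrite le_eqVlt; apply: predU1l; congr (_ * ln _); field; rewrite !gt_eqF.
Qed.

Lemma potential_le p : inAt a b Om p -> pos_support Om p ->
  potential p <= \sum_i \sum_j weight Om q i j * ln (b j).
Proof.
move=> pS pP; apply: ler_sum => i _; apply: ler_sum => j _.
have [w_gt0 | w_le0] := ltrP 0 (weight Om q i j); last first.
  by rewrite (@le_anti _ _ (weight Om q i j) 0) ?w_le0 ?(weight_ge0 qS) // !mul0r.
have [Om_gt0 _ _] := weight_gt0P qS Fq_gt0 w_gt0.
have [_ B_gt0] := pP i j Om_gt0.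
rewrite ler_pM2l // ler_ln ?posrE ?b_gt0 //.
exact: (Bin_le pS).
Qed.

End Potential.

Section Iteration.
Variables (R : realType) (m n : nat) (a : 'I_m -> R) (b : 'I_n -> R) (Om : 'M[R]_(m, n)).
Hypotheses (a_gt0 : forall i, 0 < a i) (b_gt0 : forall j, 0 < b j).
Variable p0 : mpair R m n.
Hypotheses (p0S : inAt a b Om p0) (p0P : pos_support Om p0).

Lemma iterT_inv k :
  inAt a b Om (iterT a b Om p0 k) /\ pos_support Om (iterT a b Om p0 k).
Proof.
elim: k => [|k [pS pP]]; first exact: (conj p0S p0P).
have p1S := inAt_T1 a_gt0 pS pP; have p1P := pos_support_T1 a_gt0 pS pP.
have -> : iterT a b Om p0 k.+1 = T2 b Om (T1 a Om (iterT a b Om p0 k)) by [].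
by split; [exact: (inAt_T2 b_gt0 p1S p1P) | exact: (pos_support_T2 b_gt0 p1S p1P)].
Qed.

Lemma Fobj_iterT_cvg q : inAt a b Om q -> 0 < Fobj Om q ->
  (forall p, inAt a b Om p -> Fobj Om p <= Fobj Om q) ->
  (fun k => Fobj Om (iterT a b Om p0 k)) @ \oo --> Fobj Om q.
Proof.
move=> qS Fq_gt0 q_max; set Fq := Fobj Om q; set p_ := iterT a b Om p0.
pose u k := 2 * (1 - Fobj Om (p_ k.+1) / Fq).
have u_ge0 k : 0 <= u k.
  rewrite mulr_ge0 // subr_ge0 ler_pdivrMr // mul1r.
  exact: (q_max _ (iterT_inv k.+1).1).
have u_le k : u k <= potential Om q (p_ k.+1) - potential Om q (p_ k).
  have [pS pP] := iterT_inv k; have [p2S p2P] := iterT_inv k.+1.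
  apply: le_trans (potential_gain a_gt0 b_gt0 qS Fq_gt0 pS pP).
  have p1S := inAt_T1 a_gt0 pS pP; have p1P := pos_support_T1 a_gt0 pS pP.
  have [i [j /(weight_gt0P qS Fq_gt0) [Om_gt0 _ _]]] := exists_weight_gt0 Fq_gt0.
  have G1_gt0 := Fobj_gt0 p1S p1P Om_gt0; have G2_gt0 := Fobj_gt0 p2S p2P Om_gt0.
  have ln1 : 0 <= ln (Fq / Fobj Om (T1 a Om (p_ k))).
    by rewrite ln_ge0 // ler_pdivlMr // mul1r; exact: (q_max _ p1S).
  have ln2 : 1 - Fobj Om (p_ k.+1) / Fq <= ln (Fq / Fobj Om (p_ k.+1)).
    rewrite -[Fq / _]invf_div lnV ?posrE ?divr_gt0 // lerNr opprB.
    by rewrite ln_le_subr1 // divr_gt0.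
  by rewrite /u; move: ln1 ln2 => /=; lra.
have u_cvg : u @ \oo --> 0.
  apply: (cvg0_of_bounded_increments u_ge0 u_le) => k.
  by have [pS pP] := iterT_inv k; exact: (potential_le b_gt0 qS Fq_gt0 pS pP).
rewrite -cvg_shiftS.
have -> : [sequence Fobj Om (p_ k.+1)]_k = (fun k => Fq - Fq / 2 * u k).
  by apply: funext => k; rewrite /u /=; field; rewrite gt_eqF.
have := cvgB (cvg_cst Fq) (cvgM (cvg_cst (Fq / 2)) u_cvg).
by rewrite mulr0 subr0; apply.
Qed.

End Iteration.

Lemma mx_entry_le_norm (R : realDomainType) (k l : nat) (M : 'M[R]_(k, l)) i j :
  `|M i j| <= `|M|.
Proof.
by rewrite [leRHS]/Num.norm /= mx_normrE (le_bigmax _ (fun ij => `|M ij.1 ij.2|) (i, j)).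
Qed.

Section RelInterior.
Variables (R : realType) (m n : nat).
Implicit Types (S : mpair R m n -> Prop) (p r : mpair R m n).

Definition extend (t : R) p r : mpair R m n :=
  ((1 + t) *: p.1 - t *: r.1, (1 + t) *: p.2 - t *: r.2).

Lemma affine_hull_extend S t p r : S p -> S r -> affine_hull S (extend t p r).
Proof.
move=> Sp Sr; exists 2%N, (fun k => if k == ord0 then 1 + t else - t),
  (fun k => if k == ord0 then p else r).
split; first by move=> k; case: ifP.
by rewrite !big_ord_recl !big_ord0 /= !addr0 !scaleNr; split; first ring.
Qed.

Lemma rel_interior_extend S p r :
  rel_interior S p -> S r -> exists2 t, 0 < t & S (extend t p r).
Proof.
case=> Sp [eps eps_gt0 near_p] Sr.
pose M := `|p.1 - r.1| + `|p.2 - r.2| + 1.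
have [d1_ge0 d2_ge0] := (normr_ge0 (p.1 - r.1), normr_ge0 (p.2 - r.2)).
have M_gt0 : 0 < M by rewrite /M; lra.
have close (A B : 'M[R]_(m.+1, n.+1)) x y : `|A - B| < M ->
    `|((1 + eps / M) *: A - eps / M *: B) x y - A x y| < eps.
  move=> AB_lt; have -> : ((1 + eps / M) *: A - eps / M *: B) x y - A x y =
                          eps / M * (A - B) x y by rewrite !mxE; ring.
  rewrite normrM gtr0_norm ?divr_gt0 //.
  apply: le_lt_trans (ler_wpM2l (ltW (divr_gt0 eps_gt0 M_gt0)) (mx_entry_le_norm _ x y)) _.
  by rewrite mulrAC ltr_pdivrMr // ltr_pM2l.
exists (eps / M); first exact: divr_gt0.
apply: near_p => [|x y|x y]; first exact: affine_hull_extend.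
  by apply: close; rewrite /M; lra.
by apply: close; rewrite /M; lra.
Qed.

Lemma rel_interior_gt0 S p r (f : mpair R m n -> R) :
  rel_interior S p -> S r -> (forall q, S q -> 0 <= f q) -> 0 < f r ->
  (forall t, f (extend t p r) = (1 + t) * f p - t * f r) -> 0 < f p.
Proof.
move=> p_int Sr f_ge0 fr_gt0 f_extend.
have [t t_gt0 S_ext] := rel_interior_extend p_int Sr.
rewrite lt0r f_ge0 ?andbT; last by case: p_int.
apply/eqP => fp0; have := f_ge0 _ S_ext.
by rewrite f_extend fp0 mulr0 add0r oppr_ge0 leNgt mulr_gt0.
Qed.

End RelInterior.

Section Concentrate.
Variables (R : realType) (m n : nat) (a : 'I_m -> R) (b : 'I_n -> R) (Om : 'M[R]_(m, n)).
Hypothesis a_gt0 : forall i, 0 < a i.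

Definition concentrate (p : mpair R m n) i j : mpair R m n :=
  (\matrix_(x, y) if x == lift ord0 i then (if y == lift ord0 j then a i else 0)
                  else p.1 x y, p.2).

Lemma Ain_concentrate p i j : Ain (concentrate p i j) i j = a i.
Proof. by rewrite /Ain mxE !eqxx. Qed.

Lemma inAt_concentrate p i j :
  inAt a b Om p -> 0 < Om i j -> inAt a b Om (concentrate p i j).
Proof.
move=> [[A0 [B0 [Ar [A0j B_sums]]]] [C1 [C2 C3]]] Om_gt0.
have lift_eq k l : (lift ord0 k == lift ord0 l :> 'I_m.+1) = (k == l).
  exact/inj_eq/lift_inj.
have lift_eq' k l : (lift ord0 k == lift ord0 l :> 'I_n.+1) = (k == l).
  exact/inj_eq/lift_inj.
split; [split; [|split; [exact: B0|split; [|split]]] | split; [|split]] => //.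
- move=> x y; rewrite mxE; case: ifP => _; last exact: A0.
  by case: ifP => _ //; exact: ltW.
- move=> k; under eq_bigr do rewrite mxE lift_eq.
  have [->|_] := eqVneq k i; last exact: Ar.
  rewrite (bigD1 (lift ord0 j)) //= eqxx big1 ?addr0 // => y /negbTE -> //.
- by move=> y; rewrite mxE (negbTE (neq_lift _ _)).
- move=> k l Om_le0; split; last exact: (C1 k l Om_le0).2.
  rewrite mxE lift_eq lift_eq'; have [ki|_] := eqVneq k i; last exact: (C1 k l Om_le0).1.
  have [lj|_] := eqVneq l j => //.
  by move: Om_le0; rewrite ki lj leNgt Om_gt0.
- move=> k k_pos; rewrite mxE lift_eq; have [_|_] := eqVneq k i; last exact: C3.
  by rewrite (negbTE (neq_lift _ _)).
Qed.

End Concentrate.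

Section InteriorSupport.
Variables (R : realType) (m n : nat) (a : 'I_m -> R) (b : 'I_n -> R) (Om : 'M[R]_(m, n)).
Hypotheses (a_gt0 : forall i, 0 < a i) (b_gt0 : forall j, 0 < b j).

Lemma interior_pos_support p : rel_interior (inAt a b Om) p -> pos_support Om p.
Proof.
move=> p_int i j Om_gt0; have [pS _] := p_int.
split.
  apply: (rel_interior_gt0 (f := fun q => Ain q i j) p_int
            (inAt_concentrate a_gt0 pS Om_gt0)).
  - by move=> q qS; exact: (Ain_ge0 qS).
  - by rewrite Ain_concentrate.
  - by move=> t; rewrite /Ain /= !mxE.
have OmT_gt0 : 0 < Om^T j i by rewrite mxE.
apply: (rel_interior_gt0 (f := fun q => Bin q i j) p_int
          (inAt_swapT (inAt_concentrate b_gt0 (inAt_swap pS) OmT_gt0))).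
- by move=> q qS; exact: (Bin_ge0 qS).
- by rewrite Bin_swap Ain_concentrate.
- by move=> t; rewrite /Bin /= !mxE.
Qed.

End InteriorSupport.

Section ClosedSets.
Variables (T : topologicalType) (R : realType).

Lemma closed_ge0_continuous (h : T -> R) : continuous h -> closed [set v | 0 <= h v].
Proof. by move=> /continuous_closedP/(_ _ (@closed_ge _ 0)). Qed.

Lemma closed_eq_continuous (h g : T -> R) :
  continuous h -> continuous g -> closed [set v | h v = g v].
Proof.
move=> hc gc; have /continuous_closedP/(_ _ (@closed_eq _ 0)) : continuous (h \- g).
  by move=> v; apply: continuousB; [exact: hc | exact: gc].
by congr closed; apply/seteqP; split => v /=; [move/subr0_eq | move=> ->; rewrite subrr].
Qed.

Lemma closed_forall (I : Type) (P : I -> set T) :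
  (forall i, closed (P i)) -> closed [set v | forall i, P i v].
Proof.
move=> Pc; have := closed_bigI (fun i (_ : setT i) => Pc i).
by congr closed; apply/seteqP; split => v /= Pv i //; apply: Pv.
Qed.

Lemma continuous_sum (I : Type) (r : seq I) (P : pred I) (f : I -> T -> R) :
  (forall i, continuous (f i)) -> continuous (fun v => \sum_(i <- r | P i) f i v).
Proof.
move=> fc; elim: r => [|i r IH].
  by under eq_fun do rewrite big_nil; exact: cst_continuous.
under eq_fun do rewrite big_cons.
by case: (P i) => // v; apply: continuousD; [exact: fc | exact: IH].
Qed.

End ClosedSets.

Section Compactness.
Variables (R : realType) (m n : nat) (a : 'I_m -> R) (b : 'I_n -> R) (Om : 'M[R]_(m, n)).
(* [bounded_closed_compact] is stated for row vectors, hence this encoding. *)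
Local Notation vec := 'rV[R]_(m.+1 * n.+1 + m.+1 * n.+1).

Definition pair_of_vec (v : vec) : mpair R m n := (vec_mx (lsubmx v), vec_mx (rsubmx v)).
Definition vec_of_pair (p : mpair R m n) : vec := row_mx (mxvec p.1) (mxvec p.2).

Lemma vec_of_pairK : cancel vec_of_pair pair_of_vec.
Proof. by case=> A B; rewrite /pair_of_vec /vec_of_pair row_mxKl row_mxKr !mxvecK. Qed.

Lemma pair_of_vec1 v x y : (pair_of_vec v).1 x y = v 0 (lshift _ (mxvec_index x y)).
Proof. by rewrite /pair_of_vec /= !mxE. Qed.

Lemma pair_of_vec2 v x y : (pair_of_vec v).2 x y = v 0 (rshift _ (mxvec_index x y)).
Proof. by rewrite /pair_of_vec /= !mxE. Qed.

Lemma continuous_pair_of_vec1 x y : continuous (fun v => (pair_of_vec v).1 x y).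
Proof. by under eq_fun do rewrite pair_of_vec1; exact: coord_continuous. Qed.

Lemma continuous_pair_of_vec2 x y : continuous (fun v => (pair_of_vec v).2 x y).
Proof. by under eq_fun do rewrite pair_of_vec2; exact: coord_continuous. Qed.

Lemma closed_inAt : closed [set v | inAt a b Om (pair_of_vec v)].
Proof.
rewrite /inAt /inA.
repeat first [ apply: closedI | apply: closed_forall => ? | apply: closed_ge0_continuous
             | apply: closed_eq_continuous ].
all: first [ exact: cst_continuous | exact: continuous_pair_of_vec1
           | exact: continuous_pair_of_vec2
           | apply: continuous_sum => ?;
             first [exact: continuous_pair_of_vec1 | exact: continuous_pair_of_vec2] ].
Qed.

Lemma continuous_Fobj : continuous (fun v => Fobj Om (pair_of_vec v)).
Proof.
apply: continuous_sum => i; apply: continuous_sum => j v.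
pose A v := (pair_of_vec v).1 (lift ord0 i) (lift ord0 j).
pose B v := (pair_of_vec v).2 (lift ord0 i) (lift ord0 j).
have sqrtAB : {for v, continuous (fun v => Num.sqrt (A v * B v))}.
  apply: (@continuous_comp _ _ _ (A \* B) Num.sqrt).
    by apply: continuousM; [exact: continuous_pair_of_vec1 | exact: continuous_pair_of_vec2].
  exact: sqrt_continuous.
exact: (@continuousM _ _ _ (fun=> Om i j) v sqrtAB (@cst_continuous _ _ (Om i j) v)).
Qed.

Hypotheses (a_gt0 : forall i, 0 < a i) (b_gt0 : forall j, 0 < b j).

Definition total_mass := \sum_i a i + \sum_j b j.

Lemma inAt_entry_le p x y : inAt a b Om p ->
  p.1 x y <= total_mass /\ p.2 x y <= total_mass.
Proof.
case=> [[A0 [B0 [Ar [A0j [Bc Bi0]]]]] _].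
have a_le_sum i : a i <= \sum_i a i by apply: ler_sum_term => k; exact: ltW.
have b_le_sum j : b j <= \sum_j b j by apply: ler_sum_term => k; exact: ltW.
have sum_a_ge0 : 0 <= \sum_i a i by apply: sumr_ge0 => i _; exact: ltW.
have sum_b_ge0 : 0 <= \sum_j b j by apply: sumr_ge0 => j _; exact: ltW.
split.
  apply: le_trans (_ : \sum_i a i <= _); last by rewrite lerDl.
  case: (unliftP ord0 x) => [i|] ->; last by rewrite A0j.
  apply: le_trans (a_le_sum i); rewrite Ar; apply: ler_sum_term => k; exact: A0.
apply: le_trans (_ : \sum_j b j <= _); last by rewrite lerDr.
case: (unliftP ord0 y) => [j|] ->; last by rewrite Bi0.
apply: le_trans (b_le_sum j); rewrite Bc.
by apply: (@ler_sum_term _ _ (fun i => p.2 i (lift ord0 j))) => k; exact: B0.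
Qed.

Lemma norm_le_total_mass v : inAt a b Om (pair_of_vec v) -> `|v| <= total_mass.
Proof.
move=> vS.
rewrite [leLHS]/Num.norm /= mx_normrE; apply: bigmax_le => [|[i k] _].
  by apply: le_trans (inAt_ge0 vS ord0 ord0).1 (inAt_entry_le ord0 ord0 vS).1.
rewrite /= (ord1 i) -(splitK k); case: (fintype.split k) => [k1|k2] /=.
  case/mxvec_indexP: k1 => x y; rewrite -pair_of_vec1 ger0_norm.
    exact: (inAt_entry_le x y vS).1.
  exact: (inAt_ge0 vS x y).1.
case/mxvec_indexP: k2 => x y; rewrite -pair_of_vec2 ger0_norm.
  exact: (inAt_entry_le x y vS).2.
exact: (inAt_ge0 vS x y).2.
Qed.

Lemma bounded_inAt : bounded_set [set v | inAt a b Om (pair_of_vec v)].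
Proof.
change (\forall M \near +oo,
  globally [set v | inAt a b Om (pair_of_vec v)] [set x | `|x| <= M]).
near=> M => v /= /norm_le_total_mass vM; apply: le_trans vM _.
by near: M; apply: nbhs_pinfty_ge; exact: num_real.
Unshelve. all: by end_near.
Qed.

Lemma exists_Fobj_max p0 : inAt a b Om p0 ->
  exists2 ps, inAt a b Om ps & forall q, inAt a b Om q -> Fobj Om q <= Fobj Om ps.
Proof.
move=> p0S; set K := [set v | inAt a b Om (pair_of_vec v)].
have K_neq0 : K !=set0 by exists (vec_of_pair p0); rewrite /K /= vec_of_pairK.
have K_compact : compact K := bounded_closed_compact bounded_inAt closed_inAt.
have [v vK v_max] := compact_EVT_max K_neq0 K_compact (continuous_subspaceT continuous_Fobj).
exists (pair_of_vec v); first exact: set_mem vK.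
move=> q qS; have := v_max (vec_of_pair q); rewrite vec_of_pairK; apply.
by apply: mem_set; rewrite /K /= vec_of_pairK.
Qed.

End Compactness.

Unset Implicit Arguments. Set Strict Implicit.

Theorem theorem2p15 (R : realType) (m n : nat) (a : 'I_m -> R) (b : 'I_n -> R)
  (Om : 'M[R]_(m, n)) (p0 : mpair R m n) :
  (0 < m)%N -> (0 < n)%N ->
  (forall i, 0 < a i) -> (forall j, 0 < b j) ->
  rel_interior (inAt a b Om) p0 ->
  exists2 pstar : mpair R m n,
    inAt a b Om pstar /\ (forall q, inAt a b Om q -> Fobj Om q <= Fobj Om pstar) &
    (fun k => Fobj Om (iterT a b Om p0 k)) @ \oo --> Fobj Om pstar.
Proof.
move=> _ _ a_gt0 b_gt0 p0_int.
have [p0S _] := p0_int.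
have p0P := interior_pos_support a_gt0 b_gt0 p0_int.
have [ps psS ps_max] := exists_Fobj_max a_gt0 b_gt0 p0S.
exists ps => //.
have [Fps_gt0 | Fps_le0] := ltrP 0 (Fobj Om ps).
  exact: (Fobj_iterT_cvg a_gt0 b_gt0 p0S p0P psS Fps_gt0 ps_max).
have Fk_eq k : Fobj Om (iterT a b Om p0 k) = Fobj Om ps.
  have [pkS _] := iterT_inv a_gt0 b_gt0 p0S p0P k.
  by apply: le_anti; rewrite ps_max //= (le_trans Fps_le0 (Fobj_ge0 pkS)).
by under eq_fun do rewrite Fk_eq; exact: cvg_cst.
Qed.
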